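(* Let $n\ge1$ and let $\mathfrak h_{2n+2}$ be the real Lie algebra with basis $X^1,\dots,X^{2n+2}$ whose only nonzero brackets are $[X^i,X^{n+1}]=X^{n+1+i}$ for $1\le i\le n$, with dual basis $\alpha_1,\dots,\alpha_{2n+2}$, so that $d\alpha_i=0$ for $1\le i\le n+1$ and $i=2n+2$, and $d\alpha_{n+1+i}=\alpha_{n+1}\wedge\alpha_i$ for $1\le i\le n$. Let $g=\sum_i\alpha_i\otimes\alpha_i$ (so $X^1,\dots,X^{2n+2}$ is orthonormal) and let $J$ be an endomorphism of $\mathfrak h_{2n+2}$ with $J^2=-\mathrm{Id}$ and $g(JX,JY)=g(X,Y)$. Write $JX^i=\sum_{j}a^i_jX^j$ and let $\mathcal J$ be the $(2n+2)\times(2n+2)$ matrix whose $(i,j)$ entry is $a^i_j$ (it is orthogonal and antisymmetric). Let $F=\frac12\sum_{i,j}a^i_j\,\alpha_i\wedge\alpha_j$ be the Kähler form, viewed as a left-invariant 2-form on the corresponding simply connected Lie group. Then $dF=0$ if and only if $$\mathcal J=\begin{pmatrix} O & A\\ -{}^tA & O\end{pmatrix}$$ with $O$ the $(n+1)\times(n+1)$ zero matrix and $A$ an orthogonal $(n+1)\times(n+1)$ matrix whose upper-left $n\times n$ block $B$ (entries $a^i_{n+1+j}$, $1\le i,j\le n$) is symmetric.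
   Context: Here $d$ is the exterior derivative of left-invariant forms, determined by $d\alpha(X,Y)=-\alpha([X,Y])$ for left-invariant 1-forms, equivalently by the stated structure equations. *)

From HB Require Import structures.
From mathcomp Require Import all_boot all_order all_algebra.
Set Implicit Arguments. Unset Strict Implicit. Unset Printing Implicit Defensive.
Import Order.TTheory GRing.Theory Num.Theory.
Local Open Scope ring_scope.

(* Indices 0..2n+1 (0-based) of 'I_(n.+1 + n.+1) stand for X^1..X^{2n+2}:
   nat index k <-> X^{k+1}.  Thus X^i (1<=i<=n) is index i-1 < n,
   X^{n+1} is index n, X^{n+1+i} is index n+i. *)

(* Structure constants of h_{2n+2}: coefficient of X^m in [X^k, X^l].
   Only nonzero brackets: [X^i, X^{n+1}] = X^{n+1+i} (1<=i<=n), and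
   antisymmetry. *)
Definition hbr (R : nzRingType) (n : nat) (k l m : 'I_(n.+1 + n.+1)) : R :=
  if [&& (k < n)%N, (l == n :> nat) & (m == (k + n.+1)%N :> nat)] then 1
  else if [&& (l < n)%N, (k == n :> nat) & (m == (l + n.+1)%N :> nat)] then -1
  else 0.

(* (alpha_i /\ alpha_j)(X^k, X^l) *)
Definition wedge11 (R : nzRingType) (d : nat) (i j k l : 'I_d) : R :=
  ((i == k) && (j == l))%:R - ((i == l) && (j == k))%:R.

Definition kahler_form (R : fieldType) (d : nat) (a : 'M[R]_d) (k l : 'I_d) : R :=
  2^-1 * \sum_(i < d) \sum_(j < d) a i j * wedge11 R i j k l.

(* Exterior derivative of a left-invariant 2-form w (given by its values on
   basis pairs), with the convention d alpha (X,Y) = - alpha([X,Y]):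
   dw(X,Y,Z) = - w([X,Y],Z) + w([X,Z],Y) - w([Y,Z],X). *)
Definition d2form (R : nzRingType) (n : nat)
    (w : 'I_(n.+1 + n.+1) -> 'I_(n.+1 + n.+1) -> R)
    (k l m : 'I_(n.+1 + n.+1)) : R :=
  - (\sum_p hbr R k l p * w p m)
  + (\sum_p hbr R k m p * w p l)
  - (\sum_p hbr R l m p * w p k).

From HB Require Import structures.
From mathcomp Require Import all_boot all_order all_algebra.
From mathcomp Require Import zify ring.
Set Implicit Arguments. Unset Strict Implicit. Unset Printing Implicit Defensive.
Import Order.TTheory GRing.Theory Num.Theory.
Local Open Scope ring_scope.

(* Since J^2 = -1 and J is orthogonal, the matrix a of J is skew, so F has
   matrix a.  The only nonzero brackets are [X^i, X^{n+1}] (i <= n), hence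
   dF vanishes on every triple not containing X^{n+1}, and dF = 0 amounts to
   dF(X^i, X^{n+1}, X^c) = 0, i.e. a^{n+1+i}_c = 0 for c > n+1 and
   a^{n+1+i}_j = a^{n+1+j}_i for i, j <= n.  By skewness the whole lower
   right block of a then vanishes, so a = [[P, A], [-A^T, 0]]; orthogonality
   of a gives A^T A = 1, hence A A^T = 1, hence P P^T = 0 and P = 0. *)

Lemma sum_delta (R : nzRingType) (d : nat) (q : 'I_d) (w : 'I_d -> R) :
  \sum_p (p == q)%:R * w p = w q.
Proof.
rewrite (bigD1 q) //= eqxx mul1r big1 ?addr0 // => p /negbTE ->.
by rewrite mul0r.
Qed.

Lemma sum_cond_delta (R : nzRingType) (d : nat) (b : bool) (q : 'I_d)
    (w : 'I_d -> R) :
  \sum_p (b && (p == q))%:R * w p = if b then w q else 0.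
Proof. by case: b; [exact: sum_delta | rewrite big1 // => p; rewrite mul0r]. Qed.

Lemma orthogonal_complex_skew (R : nzRingType) (d : nat) (a : 'M[R]_d) :
  a *m a = - 1%:M -> a *m a^T = 1%:M -> a^T = - a.
Proof.
move=> a2 aaT.
by rewrite -[a^T]mul1mx -[1%:M]opprK -a2 mulNmx -mulmxA aaT mulmx1.
Qed.

Lemma kahler_formE (R : numFieldType) (d : nat) (a : 'M[R]_d) (k l : 'I_d) :
  a^T = - a -> kahler_form a k l = a k l.
Proof.
move=> /matrixP skew_a.
have sum_wedge (i0 j0 : 'I_d) :
    \sum_i \sum_j a i j * ((i == i0) && (j == j0))%:R = a i0 j0.
  under eq_bigr do under eq_bigr do rewrite -mulnb natrM mulrC -mulrA.
  under eq_bigr do rewrite -mulr_sumr sum_delta.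
  exact: sum_delta.
rewrite /kahler_form /wedge11.
under eq_bigr do under eq_bigr do rewrite mulrBr.
under eq_bigr do rewrite sumrB.
rewrite sumrB !sum_wedge.
have := skew_a k l; rewrite !mxE => ->.
by rewrite opprK; field.
Qed.

Lemma skew_diag_eq0 (R : numDomainType) (m : nat) (M : 'M[R]_m) (i : 'I_m) :
  M^T = - M -> M i i = 0.
Proof.
move=> /matrixP/(_ i i); rewrite !mxE => /eqP.
by rewrite -addr_eq0 -mulr2n mulrn_eq0 => /eqP.
Qed.

Lemma skew_mx_eq0 (R : numDomainType) (n : nat) (M : 'M[R]_n.+1) :
  M^T = - M -> (forall (i : 'I_n) j, M (widen_ord (leqnSn n) i) j = 0) -> M = 0.
Proof.
move=> skew_M rows0.
have lift_max_widen (i : 'I_n) : lift ord_max i = widen_ord (leqnSn n) i.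
  by apply: val_inj; exact: lift_max.
apply/matrixP => i j; rewrite mxE.
case: (unliftP ord_max i) => [i' -> | ->]; first by rewrite lift_max_widen.
case: (unliftP ord_max j) => [j' -> | ->]; last exact: skew_diag_eq0.
move/matrixP/(_ (lift ord_max j') ord_max): skew_M; rewrite !mxE => ->.
by rewrite lift_max_widen rows0 oppr0.
Qed.

Lemma skew_dlsubmx (R : nzRingType) (p q : nat) (a : 'M[R]_(p + q)) :
  a^T = - a -> dlsubmx a = - (ursubmx a)^T.
Proof.
move=> /matrixP skew_a; apply/matrixP => i j.
by have := skew_a (lshift q j) (rshift p i); rewrite !mxE.
Qed.

Lemma skew_drsubmx (R : nzRingType) (p q : nat) (a : 'M[R]_(p + q)) :
  a^T = - a -> (drsubmx a)^T = - drsubmx a.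
Proof.
move=> /matrixP skew_a; apply/matrixP => i j.
by have := skew_a (rshift p i) (rshift p j); rewrite !mxE.
Qed.

Lemma mulmx_tr_eq0 (R : realDomainType) (m p : nat) (P : 'M[R]_(m, p)) :
  P *m P^T = 0 -> P = 0.
Proof.
move=> /matrixP PPT0; apply/matrixP => i j; rewrite mxE.
have := PPT0 i i; rewrite !mxE.
under eq_bigr do rewrite mxE -expr2.
move=> /psumr_eq0P sq0.
by apply/eqP; rewrite -sqrf_eq0 sq0 // => k _; rewrite sqr_ge0.
Qed.

Lemma orthogonal_skew_block (R : realDomainType) (m : nat) (P A : 'M[R]_m) :
  block_mx P A (- A^T) 0 *m (block_mx P A (- A^T) 0)^T = 1%:M ->
  P = 0 /\ A *m A^T = 1%:M.
Proof.
rewrite tr_block_mx mulmx_block (scalar_mx_block m m) linearN /= trmxK trmx0.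
case/eq_block_mx => PPT_AAT _ _ ATA.
have AAT : A *m A^T = 1%:M.
  by apply: mulmx1C; move: ATA; rewrite mulmx0 addr0 mulNmx mulmxN opprK.
split=> //; apply: mulmx_tr_eq0.
by move: PPT_AAT; rewrite AAT -[RHS]add0r => /addIr.
Qed.

Lemma val_inord (n x : nat) :
  (x < n.+1 + n.+1)%N -> val (inord x : 'I_(n.+1 + n.+1)) = x.
Proof. exact: inordK. Qed.

Lemma lshift_inord (n : nat) (x : 'I_n.+1) :
  lshift n.+1 x = inord x :> 'I_(n.+1 + n.+1).
Proof. by apply: val_inj; rewrite val_inord //; have := ltn_ord x; lia. Qed.

Lemma rshift_inord (n : nat) (x : 'I_n.+1) :
  rshift n.+1 x = inord (x + n.+1) :> 'I_(n.+1 + n.+1).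
Proof. by apply: val_inj; rewrite val_inord /= addnC //; have := ltn_ord x; lia. Qed.

Section HeisenbergBracket.

Variables (R : comNzRingType) (n : nat).
Local Notation I := 'I_(n.+1 + n.+1).

Lemma hbrE (k l p : I) :
  hbr R k l p =
    [&& (k < n)%N, l == n :> nat & p == inord (k + n.+1)]%:R
  - [&& (l < n)%N, k == n :> nat & p == inord (l + n.+1)]%:R.
Proof.
have eq_inord x : (x < n)%N -> (p == inord (x + n.+1)) = (val p == x + n.+1).
  by move=> ?; rewrite -val_eqE val_inord //; lia.
rewrite /hbr; case: (ltnP k n) => kn; case: (ltnP l n) => ln /=;
  rewrite ?eq_inord ?(ltn_eqF kn, ltn_eqF ln) //=;
  by [rewrite subr0 | case: (_ && _); rewrite ?subr0 ?sub0r].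
Qed.

Lemma hbr_sum (w : I -> R) (k l : I) :
  \sum_p hbr R k l p * w p =
    (if (k < n)%N && (l == n :> nat) then w (inord (k + n.+1)) else 0)
  - (if (l < n)%N && (k == n :> nat) then w (inord (l + n.+1)) else 0).
Proof.
under eq_bigr do rewrite hbrE !andbA mulrBl.
by rewrite sumrB !sum_cond_delta.
Qed.

(* [form_on_bracket b k l m] is [w([X_k, X_l], X_m)] for the 2-form [w] with
   matrix [b], read on natural-number indices. *)
Definition form_on_bracket (b : nat -> nat -> R) (k l m : nat) : R :=
    (if (k < n)%N && (l == n) then b (k + n.+1)%N m else 0)
  - (if (l < n)%N && (k == n) then b (l + n.+1)%N m else 0).

Definition d2form_nat (b : nat -> nat -> R) (k l m : nat) : R :=
  - form_on_bracket b k l m + form_on_bracket b k m l - form_on_bracket b l m k.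

Lemma d2form_nat_mid_upperE (b : nat -> nat -> R) i c :
  (i < n)%N -> (n < c)%N -> d2form_nat b i n c = - b (i + n.+1)%N c.
Proof.
move=> lt_in lt_nc; rewrite /d2form_nat /form_on_bracket.
by rewrite lt_in eqxx ltnn ltnNge (ltnW lt_nc) (ltn_eqF lt_in) (gtn_eqF lt_nc) /=; ring.
Qed.

Lemma d2form_nat_mid_lowerE (b : nat -> nat -> R) i j :
  (i < n)%N -> (j < n)%N ->
  d2form_nat b i n j = b (j + n.+1)%N i - b (i + n.+1)%N j.
Proof.
move=> lt_in lt_jn; rewrite /d2form_nat /form_on_bracket.
by rewrite lt_in lt_jn eqxx ltnn (ltn_eqF lt_in) (ltn_eqF lt_jn) /=; ring.
Qed.

Lemma d2form_nat_eq0 (b : nat -> nat -> R) :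
    (forall i c, (i < n)%N -> (n < c < n.+1 + n.+1)%N -> b (i + n.+1)%N c = 0) ->
    (forall i j, (i < n)%N -> (j < n)%N -> b (i + n.+1)%N j = b (j + n.+1)%N i) ->
  forall k l m, (k < n.+1 + n.+1)%N -> (l < n.+1 + n.+1)%N -> (m < n.+1 + n.+1)%N ->
  d2form_nat b k l m = 0.
Proof.
move=> C1 C2 k l m hk hl hm; rewrite /d2form_nat /form_on_bracket.
case: (ltngtP k n) => [Hk|Hk|->]; case: (ltngtP l n) => [Hl|Hl|->];
  case: (ltngtP m n) => [Hm|Hm|->]; rewrite /= ?ltnn ?eqxx /=.
all: try ring.
all: first [ rewrite C1 ?Hk ?Hl ?Hm ?hk ?hl ?hm //; ring
           | rewrite (C2 k l) //; ring | rewrite (C2 k m) //; ring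
           | rewrite (C2 l m) //; ring ].
Qed.

End HeisenbergBracket.

Section KahlerForm.

Variables (R : numFieldType) (n : nat) (a : 'M[R]_(n.+1 + n.+1)).
Hypothesis skew_a : a^T = - a.

Local Notation b := (fun x y : nat => a (inord x) (inord y)).

Lemma d2form_kahlerE (k l m : 'I_(n.+1 + n.+1)) :
  d2form (kahler_form a) k l m = d2form_nat n b k l m.
Proof.
by rewrite /d2form !hbr_sum !kahler_formE // /d2form_nat /form_on_bracket !inord_val.
Qed.

Lemma d2form_kahler_eq0P :
  (forall k l m, d2form (kahler_form a) k l m = 0) <->
  (forall (i : 'I_n) c, drsubmx a (widen_ord (leqnSn n) i) c = 0) /\
  (forall i j : 'I_n, dlsubmx a (widen_ord (leqnSn n) i) (widen_ord (leqnSn n) j)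
                    = dlsubmx a (widen_ord (leqnSn n) j) (widen_ord (leqnSn n) i)).
Proof.
have drE i c : drsubmx a i c = b (i + n.+1)%N (c + n.+1)%N.
  by rewrite !mxE !rshift_inord.
have dlE i j : dlsubmx a i j = b (i + n.+1)%N j.
  by rewrite !mxE rshift_inord lshift_inord.
split => [dF | [C1 C2] k l m].
  have dF_nat k l m : (k < n.+1 + n.+1)%N -> (l < n.+1 + n.+1)%N ->
      (m < n.+1 + n.+1)%N -> d2form_nat n b k l m = 0.
    by move=> *; rewrite -(dF (inord k) (inord l) (inord m)) d2form_kahlerE !val_inord.
  split => [i c | i j].
    have := ltn_ord i; have := ltn_ord c => lt_cn lt_in.
    by apply/eqP; rewrite drE /= -oppr_eq0 -(d2form_nat_mid_upperE b) ?dF_nat //; lia.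
  have := ltn_ord i; have := ltn_ord j => lt_jn lt_in.
  by apply/eqP; rewrite !dlE /= -subr_eq0 -(d2form_nat_mid_lowerE b) ?dF_nat //=; lia.
rewrite d2form_kahlerE; apply: d2form_nat_eq0; try exact: ltn_ord.
  move=> i c lt_in /andP[lt_nc lt_cd].
  have := C1 (Ordinal lt_in) (inord (c - n.+1)).
  by rewrite drE /= inordK ?subnK //; lia.
move=> i j lt_in lt_jn.
by have := C2 (Ordinal lt_in) (Ordinal lt_jn); rewrite !dlE.
Qed.

End KahlerForm.

Theorem lemma3p2 (R : realFieldType) (n : nat) (hn : (0 < n)%N)
  (a : 'M[R]_(n.+1 + n.+1))
  (hJ2 : a *m a = - 1%:M) (hJg : a *m a^T = 1%:M) :
  (forall k l m, d2form (kahler_form a) k l m = 0) <->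
  (exists A : 'M[R]_(n.+1),
     [/\ a = block_mx 0 A (- A^T) 0,
         A *m A^T = 1%:M &
         forall i j : 'I_n,
           A (widen_ord (leqnSn n) i) (widen_ord (leqnSn n) j)
           = A (widen_ord (leqnSn n) j) (widen_ord (leqnSn n) i)]).
Proof.
have skew_a := orthogonal_complex_skew hJ2 hJg.
rewrite d2form_kahler_eq0P //.
split => [[dr0 dl_sym] | [A [def_a AAT A_sym]]].
  have dr_a : drsubmx a = 0 := skew_mx_eq0 (skew_drsubmx skew_a) dr0.
  have def_a : a = block_mx (ulsubmx a) (ursubmx a) (- (ursubmx a)^T) 0.
    by rewrite -{1}[a]submxK skew_dlsubmx // dr_a.
  rewrite def_a in hJg; have [ul0 AAT] := orthogonal_skew_block hJg.
  exists (ursubmx a); split => //; first by rewrite {1}def_a ul0.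
  by move=> i j; apply: oppr_inj; have := dl_sym j i; rewrite skew_dlsubmx // !mxE.
split => [i c | i j]; first by rewrite def_a block_mxKdr mxE.
by rewrite def_a block_mxKdl !mxE A_sym.
Qed.
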